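(* Let $G$ be a compact group, $H$ a normal subgroup, $K=G/H$ with quotient map $g\mapsto[g]$. Let $(l_n)_{n\in\mathbb{N}}$ be continuous length functions on $G$ converging uniformly on $G$ to $\widetilde{l_\infty}$ with $\widetilde{l_\infty}(g)=0$ for $g\in H$ and $\widetilde{l_\infty}(g)>0$ for $g\notin H$, and let $l_\infty$ be the function on $K$ defined by $l_\infty([g])=\widetilde{l_\infty}(g)$. For $n\in\mathbb{N}$ define $l_n^K([g])=\inf\{l_n(g'):g'\in G,\ [g']=[g]\}$. Then each $l_n^K$ is continuous on $K$, and $(l_n^K)_{n\in\mathbb{N}}$ converges uniformly on $K$ to $l_\infty$.
   Context: A length function on a group with unit $e$: $l\ge0$, $l(g)=0$ iff $g=e$, $l(g^{-1})=l(g)$, $l(gh)\le l(g)+l(h)$. *)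

From HB Require Import structures.
From mathcomp Require Import all_boot all_order all_algebra.
From mathcomp Require Import all_classical all_reals all_analysis.
Set Implicit Arguments. Unset Strict Implicit. Unset Printing Implicit Defensive.
Import Order.TTheory GRing.Theory Num.Theory.
Import numFieldNormedType.Exports.
Local Open Scope classical_set_scope.
Local Open Scope ring_scope.

Definition is_group (G : Type) (mul : G -> G -> G) (inv : G -> G) (e : G) : Prop :=
  [/\ forall x y z, mul x (mul y z) = mul (mul x y) z,
      forall x, mul e x = x /\ mul x e = x &
      forall x, mul (inv x) x = e /\ mul x (inv x) = e].

Definition is_compact_group (G : topologicalType)
  (mul : G -> G -> G) (inv : G -> G) (e : G) : Prop :=
  [/\ is_group mul inv e,
      continuous (fun p : G * G => mul p.1 p.2),
      continuous inv,
      hausdorff_space G &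
      compact [set: G]].

Definition is_normal_subgroup (G : Type) (mul : G -> G -> G) (inv : G -> G) (e : G)
  (H : set G) : Prop :=
  [/\ H e,
      forall x y, H x -> H y -> H (mul x y),
      forall x, H x -> H (inv x) &
      forall g x, H x -> H (mul (mul g x) (inv g))].

(* K together with q : G -> K is (a model of) the quotient topological space G/H
   with quotient map g |-> [g]: q is surjective, identifies exactly the cosets
   gH, and K carries the quotient topology. *)
Definition is_quotient_by (G : topologicalType) (mul : G -> G -> G) (inv : G -> G)
  (H : set G) (K : topologicalType) (q : G -> K) : Prop :=
  [/\ forall k : K, exists g, q g = k,
      forall g g', q g = q g' <-> H (mul (inv g) g') &
      forall U : set K, open U <-> open (q @^-1` U)].

Definition is_length_function (R : realType) (G : Type) (mul : G -> G -> G)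
  (inv : G -> G) (e : G) (l : G -> R) : Prop :=
  [/\ forall g, 0 <= l g,
      forall g, l g = 0 <-> g = e,
      forall g, l (inv g) = l g &
      forall g h, l (mul g h) <= l g + l h].

Definition unif_cvg (R : realType) (X : Type) (f : nat -> X -> R) (F : X -> R) : Prop :=
  forall eps : R, 0 < eps -> exists N : nat, forall n, (N <= n)%N ->
    forall x, `|f n x - F x| < eps.

Definition quot_length (R : realType) (G K : Type) (q : G -> K) (l : G -> R) (k : K) : R :=
  inf [set l g' | g' in q @^-1` [set k]].

From HB Require Import structures.
From mathcomp Require Import all_boot all_order all_algebra.
From mathcomp Require Import all_classical all_reals all_analysis.
From mathcomp Require Import lra.
Import Order.TTheory GRing.Theory Num.Theory.
Import numFieldNormedType.Exports.
Local Open Scope classical_set_scope.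
Local Open Scope ring_scope.

(* Translating a fibre of q by g g0^-1 maps it onto the fibre of g, so the
   quotient length satisfies l^K([g]) <= l(g g0^-1) + l^K([g0]); together with
   the symmetric bound this makes l^K o q continuous, and hence l^K continuous
   for the quotient topology.  Uniform convergence passes to the infima
   because the limit is constant on fibres: if |l_n - l~| <= d everywhere, then
   the infimum of l_n over the fibre of g is within d of l~(g). *)

Lemma continuous_mul_fun (T G : topologicalType) (mul : G -> G -> G)
    (f g : T -> G) :
  continuous (fun p : G * G => mul p.1 p.2) ->
  continuous f -> continuous g -> continuous (fun x => mul (f x) (g x)).
Proof.
move=> cmul cf cg x.
apply: (continuous_comp (f := fun x => (f x, g x))) (cmul _).
exact: cvg_pair (cf x) (cg x).
Qed.

Lemma continuous_from_quotient (T K S : topologicalType) (q : T -> K)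
    (f : K -> S) :
  (forall U : set K, open (q @^-1` U) -> open U) ->
  continuous (f \o q) -> continuous f.
Proof.
move=> qopen cfq; apply/continuousP => A oA.
exact/qopen/((continuousP _).1 cfq).
Qed.

Section QuotLength.
Variables (R : realType) (G K : Type) (q : G -> K) (l : G -> R).
Hypothesis l_ge0 : forall g, 0 <= l g.

Lemma quot_length_le g : quot_length q l (q g) <= l g.
Proof.
apply: ge_inf; last by exists g.
by exists 0 => _ [x _ <-].
Qed.

Lemma quot_length_ge c g :
  (forall g', q g' = q g -> c <= l g') -> c <= quot_length q l (q g).
Proof.
move=> lb; apply: lb_le_inf; first by exists (l g), g.
by move=> _ [g' /= qg' <-]; apply: lb.
Qed.

Lemma quot_length_dist (L : G -> R) (d : R) g :
  (forall x, `|l x - L x| <= d) -> (forall x, q x = q g -> L x = L g) ->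
  `|quot_length q l (q g) - L g| <= d.
Proof.
move=> ldist Lfibre.
have lower : L g - d <= quot_length q l (q g).
  apply: quot_length_ge => g' qg'.
  by move: (ldist g'); rewrite (Lfibre _ qg') ler_norml => /andP[? ?]; lra.
move: (quot_length_le g) (ldist g); rewrite !ler_norml => ? /andP[? ?].
apply/andP; split; lra.
Qed.

End QuotLength.

Section QuotLengthContinuous.
Variables (R : realType) (G K : topologicalType).
Variables (mul : G -> G -> G) (inv : G -> G) (e : G) (H : set G) (q : G -> K).
Variable l : G -> R.
Hypotheses (grp : is_group mul inv e) (quo : is_quotient_by mul inv H q).
Hypothesis len : is_length_function mul inv e l.

Lemma quot_length_translate g g0 :
  quot_length q l (q g) <= l (mul g (inv g0)) + quot_length q l (q g0).
Proof.
have [assoc unit invP] := grp; have [_ qH _] := quo.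
have [l_ge0 _ _ l_sub] := len.
rewrite -lerBlDl; apply: quot_length_ge => g' qg'.
have fibre : q (mul (mul g (inv g0)) g') = q g.
  symmetry; apply/qH; rewrite !assoc (invP g).1 (unit _).1.
  exact/qH.
rewrite lerBlDl; apply: le_trans (l_sub _ _).
by rewrite -fibre quot_length_le.
Qed.

Lemma continuous_quot_length_comp :
  continuous (fun p : G * G => mul p.1 p.2) -> continuous inv ->
  continuous l -> continuous (quot_length q l \o q).
Proof.
move=> cmul cinv cl g0; apply/cvgrPdist_lt => eps eps_gt0.
have [l_ge0 l_eq0 _ _] := len.
pose d g := l (mul g (inv g0)) + l (mul g0 (inv g)).
have d_cvg : d g @[g --> g0] --> 0.
  have d0 : d g0 = 0.
    by rewrite /d (l_eq0 _).2 ?addr0 //; case: grp => _ _ /(_ g0) [].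
  rewrite -d0; apply: cvgD; apply: continuous_comp (cl _).
  - exact: continuous_mul_fun cmul (fun x => @cvg_id _ _) (fun x => cvg_cst _) g0.
  - exact: continuous_mul_fun cmul (fun x => cvg_cst _) cinv g0.
near=> g.
have d_lt : `|0 - d g| < eps.
  by near: g; exact: (cvgrPdist_lt _ _).1 d_cvg _ eps_gt0.
rewrite sub0r normrN ger0_norm ?addr_ge0 // /d in d_lt.
have := quot_length_translate g g0; have := quot_length_translate g0 g.
move: (l_ge0 (mul g (inv g0))) (l_ge0 (mul g0 (inv g))) => ? ? ? ?.
by rewrite /= ltr_norml; apply/andP; split; lra.
Unshelve. all: by end_near.
Qed.

End QuotLengthContinuous.

Lemma unif_cvg_quot_length (R : realType) (G K : Type) (q : G -> K)
    (l : nat -> G -> R) (ltil : G -> R) (linf : K -> R) :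
  (forall k, exists g, q g = k) -> (forall n g, 0 <= l n g) ->
  unif_cvg l ltil -> (forall g, linf (q g) = ltil g) ->
  unif_cvg (fun n => quot_length q (l n)) linf.
Proof.
move=> qsurj l_ge0 lcvg lq eps eps_gt0.
have [N lN] := lcvg _ (divr_gt0 eps_gt0 (ltr0n R 2)).
exists N => n nN k; have [g <-] := qsurj k; rewrite lq.
apply: le_lt_trans (@quot_length_dist _ _ _ q _ (l_ge0 n) ltil (eps / 2) g _ _) _.
- by move=> x; exact/ltW/lN.
- by move=> x qx; rewrite -!lq qx.
- by rewrite ltr_pdivrMr // ltr_pMr // ltr1n.
Qed.

Theorem mainTheorem17 (R : realType) (G : topologicalType)
  (mul : G -> G -> G) (inv : G -> G) (e : G) (H : set G)
  (K : topologicalType) (q : G -> K)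
  (l : nat -> G -> R) (ltil : G -> R) (linf : K -> R) :
  is_compact_group mul inv e ->
  is_normal_subgroup mul inv e H ->
  is_quotient_by mul inv H q ->
  (forall n, is_length_function mul inv e (l n)) ->
  (forall n, continuous (l n)) ->
  unif_cvg l ltil ->
  (forall g, H g -> ltil g = 0) ->
  (forall g, ~ H g -> 0 < ltil g) ->
  (forall g, linf (q g) = ltil g) ->
  (forall n, continuous (quot_length q (l n))) /\
  unif_cvg (fun n => quot_length q (l n)) linf.
Proof.
move=> [grp cmul cinv _ _] _ quo len lcont lcvg _ _ lq.
have [qsurj _ qopen] := quo.
split.
- move=> n; apply: continuous_from_quotient (fun U => (qopen U).2) _.
  exact: continuous_quot_length_comp grp quo (len n) cmul cinv (lcont n).
- apply: unif_cvg_quot_length qsurj _ lcvg lq.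
  by move=> n; have [] := len n.
Qed.
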